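(* Let $t=(t_1,\dots,t_n)$ be nonnegative reals and $D_1,\dots,D_n\in\mathcal{H}_d$ positive semidefinite. Then for any $T_1\ge|t|_1$ and any $T_\infty>0$ with $T_\infty\ge|t|_\infty$, \[ \Big\|\sum_{i=1}^nt_iD_i\Big\|\le T_\infty\cdot\sup\Big\{\Big\|\sum_{i\in\mathcal{I}}D_i\Big\|:\ \mathcal{I}\subset[n],\ |\mathcal{I}|\le\lceil T_1/T_\infty\rceil\Big\}. \]
   Context: $\mathcal{H}_d$ is the space of $d\times d$ Hermitian matrices, $\|\cdot\|$ the operator norm, $|t|_1=\sum_i|t_i|$, $|t|_\infty=\max_i|t_i|$. *)

From HB Require Import structures.
From mathcomp Require Import all_boot all_order all_algebra.
From mathcomp Require Import complex.
From mathcomp Require Import boolp classical_sets reals.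
Set Implicit Arguments. Unset Strict Implicit. Unset Printing Implicit Defensive.
Import Order.TTheory GRing.Theory Num.Theory.
Local Open Scope ring_scope.
Local Open Scope complex_scope.

Definition vnorm (R : realType) (d : nat) (v : 'cV[R[i]]_d) : R :=
  Num.sqrt (\sum_(k < d) (complex.Re (v k 0) ^+ 2 + complex.Im (v k 0) ^+ 2)).

Definition opnorm (R : realType) (d : nat) (A : 'M[R[i]]_d) : R :=
  sup [set vnorm (A *m v) | v in [set v : 'cV[R[i]]_d | vnorm v <= 1]].

Definition hermitian (R : realType) (d : nat) (A : 'M[R[i]]_d) : Prop :=
  forall i j, A j i = (A i j)^*.

Definition psd (R : realType) (d : nat) (A : 'M[R[i]]_d) : Prop :=
  hermitian A /\
  forall v : 'cV[R[i]]_d,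
    0 <= \sum_(i < d) \sum_(j < d) (v i 0)^* * A i j * v j 0.

Definition l1norm (R : realType) (n : nat) (t : 'I_n -> R) : R :=
  \sum_(i < n) `|t i|.
Definition linfnorm (R : realType) (n : nat) (t : 'I_n -> R) : R :=
  \big[Num.max/0]_(i < n) `|t i|.

From Pilot Require Import Defs.
From HB Require Import structures.
From mathcomp Require Import all_boot all_order all_algebra.
From mathcomp Require Import complex.
From mathcomp Require Import boolp classical_sets reals.
From mathcomp Require Import ring lra.
Import Order.TTheory GRing.Theory Num.Theory.
Local Open Scope ring_scope.
Local Open Scope complex_scope.

(* Put M := \sum_k t_k D_k and m := ceil (T1 / Tinf).  For a vector y the
   quadratic form y^* M y equals \sum_k t_k a_k with a_k := y^* D_k y >= 0.
   Since 0 <= t_k <= Tinf and \sum_k t_k <= Tinf m, this weighted sum is at most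
   Tinf times the sum of the m largest a_k, i.e. Tinf y^* (\sum_(k in J) D_k) y
   <= Tinf ||\sum_(k in J) D_k|| |y|^2 for some J with #|J| <= m.  Finally, for
   a positive semidefinite M the operator norm is bounded by any bound on its
   quadratic form: positivity of the form at c x - Mx controls |Mx|^2. *)

Section TopSets.
Context {R : realDomainType} {T : finType}.
Implicit Types (a t : T -> R) (J : {set T}).

Lemma exists_top_set a (m : nat) : exists J,
  #|J| = minn m #|T| /\ forall j k, j \in J -> k \notin J -> a k <= a j.
Proof.
pose J0 := [set x in take m (enum T)].
have cardJ0 : #|J0| == minn m #|T|.
  by rewrite cardsE (card_uniqP _) ?take_uniq ?enum_uniq // size_take_min -cardT.
have [J /eqP cardJ maxJ] := @arg_maxP _ R _ J0 (fun J => #|J| == minn m #|T|)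
  (fun J => \sum_(k in J) a k) cardJ0.
exists J; split => // j k jJ kJ.
have cardJ' : #|k |: (J :\ j)| == minn m #|T|.
  by rewrite cardsU1 !inE negb_and kJ orbT -cardJ (cardsD1 j J) jJ.
have := maxJ _ cardJ'.
by rewrite big_setU1 ?inE ?negb_and ?kJ ?orbT //= (big_setD1 j jJ) /= lerD2r.
Qed.

Lemma weighted_sum_le_threshold J a t (tau theta : R) :
  (forall k, 0 <= t k <= tau) ->
  (forall j, j \in J -> theta <= a j) -> (forall k, k \notin J -> a k <= theta) ->
  \sum_k t k * a k <=
    tau * \sum_(k in J) a k + theta * (\sum_k t k - tau * #|J|%:R).
Proof.
move=> t_bnd a_in a_out.
have inJ : \sum_(k in J) t k * a k <=
           \sum_(k in J) (tau * a k + theta * (t k - tau)).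
  apply: ler_sum => k /a_in; have /andP[] := t_bnd k; nra.
have outJ : \sum_(k | k \notin J) t k * a k <= \sum_(k | k \notin J) theta * t k.
  apply: ler_sum => k /a_out; have /andP[] := t_bnd k; nra.
rewrite (bigID (mem J) predT) (bigID (mem J) predT t) /=.
move: inJ outJ; rewrite big_split /= -!mulr_sumr sumrB sumr_const.
rewrite (mulr_natr tau); lra.
Qed.

Lemma weighted_sum_le_top_sum a t (tau : R) (m : nat) :
    (forall k, 0 <= a k) -> (forall k, 0 <= t k <= tau) ->
    \sum_k t k <= tau * m%:R ->
  exists2 J : {set T},
    (#|J| <= m)%N & \sum_k t k * a k <= tau * \sum_(k in J) a k.
Proof.
move=> a_ge0 t_bnd t_sum.
have [J [cardJ a_top]] := exists_top_set a m.
pose theta := \big[Num.max/0]_(k | k \notin J) a k.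
have t_sum_T : \sum_k t k <= tau * #|T|%:R.
  rewrite mulr_natr -sumr_const; apply: ler_sum => k _.
  by have /andP[] := t_bnd k.
have t_sum_J : \sum_k t k <= tau * #|J|%:R.
  by rewrite cardJ; case: leqP.
exists J; first by rewrite cardJ geq_minl.
apply: le_trans (@weighted_sum_le_threshold J a t tau theta t_bnd _ _) _.
- by move=> j jJ; apply: bigmax_le => // k; apply: a_top.
- by move=> k kJ; apply: le_bigmax_cond.
- by rewrite gerDl mulr_ge0_le0 ?bigmax_ge_id // subr_le0.
Qed.

End TopSets.

Section Sesquilinear.
Context {R : realType} {d : nat}.
Implicit Types (u v w : 'cV[R[i]]_d) (A : 'M[R[i]]_d).

Lemma Re_realM (c : R) (z : R[i]) : complex.Re (c%:C * z) = c * complex.Re z.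
Proof. by case: z => a b; simpc. Qed.

Lemma Re_conjc (z : R[i]) : complex.Re z^*%C = complex.Re z.
Proof. by case: z. Qed.

Definition sesq A u w : R[i] :=
  \sum_(i < d) \sum_(j < d) (u i 0)^* * A i j * w j 0.

Definition sqnorm v : R :=
  \sum_(k < d) (complex.Re (v k 0) ^+ 2 + complex.Im (v k 0) ^+ 2).

Lemma sqnorm0 : sqnorm (0 : 'cV[R[i]]_d) = 0.
Proof. by apply: big1 => k _; rewrite mxE /= expr0n addr0. Qed.

Lemma sqnorm_ge0 v : 0 <= sqnorm v.
Proof. by apply: sumr_ge0 => k _; rewrite addr_ge0 ?sqr_ge0. Qed.

Lemma sqnormE v : (sqnorm v)%:C = \sum_k `|v k 0| ^+ 2.
Proof. by rewrite rmorph_sum; apply: eq_bigr => k _; rewrite -add_Re2_Im2. Qed.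

Lemma sqnorm_eq0 v : sqnorm v = 0 -> v = 0.
Proof.
move=> /(congr1 (real_complex R)); rewrite sqnormE => /eqP.
rewrite psumr_eq0 => [/allP v0|k _]; last by rewrite exprn_ge0.
apply/matrixP => k l; rewrite ord1 mxE; apply/eqP.
by rewrite -normr_eq0 -sqrf_eq0 (eqP (v0 k _)) ?mem_index_enum.
Qed.

Lemma sqnormZ (c : R) v : sqnorm (c%:C *: v) = c ^+ 2 * sqnorm v.
Proof.
rewrite /sqnorm mulr_sumr; apply: eq_bigr => k _.
by rewrite mxE; case: (v k 0) => a b /=; ring.
Qed.

Lemma vnormE v : vnorm v = Num.sqrt (sqnorm v).
Proof. by []. Qed.

Lemma vnormZ (c : R) v : vnorm (c%:C *: v) = `|c| * vnorm v.
Proof. by rewrite !vnormE sqnormZ sqrtrM ?sqr_ge0 // sqrtr_sqr. Qed.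

(* [x^*%C] is [conjc x], which [conjc_real] rewrites; the plain [x^*] of
   [sesq] and [psd] is [Num.conj x], convertible but not syntactically equal. *)
Lemma sesq_expand A (a : R[i]) u w :
  sesq A (a *: u - w) (a *: u - w) =
  a^*%C * a * sesq A u u - (a^*%C * sesq A u w + a * sesq A w u) + sesq A w w.
Proof.
rewrite /sesq !mulr_sumr -big_split -sumrB -big_split /=.
apply: eq_bigr => i _; rewrite !mulr_sumr -big_split -sumrB -big_split /=.
by apply: eq_bigr => j _; rewrite !mxE rmorphB rmorphM; ring.
Qed.

Lemma sesq_hermitian A u w : Defs.hermitian A -> sesq A w u = (sesq A u w)^*%C.
Proof.
move=> hA; rewrite /sesq rmorph_sum exchange_big /=; apply: eq_bigr => j _.
rewrite rmorph_sum; apply: eq_bigr => i _.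
by rewrite !rmorphM /= conjcK hA; ring.
Qed.

Lemma sesq_sum (I : finType) (P : pred I) (F : I -> 'M[R[i]]_d) u w :
  sesq (\sum_(k | P k) F k) u w = \sum_(k | P k) sesq (F k) u w.
Proof.
rewrite /sesq [RHS]exchange_big /=; apply: eq_bigr => i _.
rewrite [RHS]exchange_big /=; apply: eq_bigr => j _.
by rewrite summxE mulr_sumr mulr_suml.
Qed.

Lemma sesqZ (a : R[i]) A u w : sesq (a *: A) u w = a * sesq A u w.
Proof.
rewrite /sesq mulr_sumr; apply: eq_bigr => i _; rewrite mulr_sumr.
by apply: eq_bigr => j _; rewrite mxE; ring.
Qed.

Lemma sesq1 u w : sesq 1 u w = \sum_k (u k 0)^* * w k 0.
Proof.
apply: eq_bigr => i _; rewrite (bigD1 i) //= big1 => [|j /negPf ji].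
  by rewrite mxE eqxx mulr1 addr0.
by rewrite mxE eq_sym ji mulr0 mul0r.
Qed.

Lemma sesq_mulmx A u w : sesq A u w = sesq 1 u (A *m w).
Proof.
rewrite sesq1; apply: eq_bigr => i _; rewrite mxE mulr_sumr.
by apply: eq_bigr => j _; rewrite mulrA.
Qed.

Lemma sesq1_self v : sesq 1 v v = (sqnorm v)%:C.
Proof.
by rewrite sesq1 sqnormE; apply: eq_bigr => k _; rewrite sqr_normc mulrC.
Qed.

Lemma psd1 : psd (1 : 'M[R[i]]_d).
Proof.
split=> [i j|v]; last by rewrite -/(sesq 1 v v) sesq1_self ler0c sqnorm_ge0.
by rewrite !mxE eq_sym conjc_nat.
Qed.

Lemma psd_Re_ge0 A v : psd A -> 0 <= complex.Re (sesq A v v).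
Proof. by case=> _ /(_ v); rewrite lecE => /andP[]. Qed.

Lemma psd_sesq_le A (c : R) u w : psd A ->
  2 * c * complex.Re (sesq A u w) <=
  c ^+ 2 * complex.Re (sesq A u u) + complex.Re (sesq A w w).
Proof.
move=> psdA; have [hA _] := psdA; have := psd_Re_ge0 A (c%:C *: u - w) psdA.
rewrite sesq_expand conjc_real (sesq_hermitian _ u w hA) -[c%:C * c%:C * _]mulrA.
by rewrite raddfD raddfB raddfD /= !Re_realM Re_conjc; nra.
Qed.

Lemma psd_sum_scale (I : finType) (t : I -> R) (D : I -> 'M[R[i]]_d) :
  (forall k, 0 <= t k) -> (forall k, psd (D k)) -> psd (\sum_k (t k)%:C *: D k).
Proof.
move=> t_ge0 psdD; split=> [i j|v].
  rewrite !summxE rmorph_sum; apply: eq_bigr => k _; have [hD _] := psdD k.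
  by rewrite !mxE hD rmorphM -[in LHS](conjc_real (t k)).
rewrite -/(sesq _ v v) sesq_sum; apply: sumr_ge0 => k _.
have [_ Dk_ge0] := psdD k; rewrite sesqZ mulr_ge0 ?ler0c //; exact: Dk_ge0.
Qed.

End Sesquilinear.

Section OperatorNorm.
Context {R : realType} {d : nat}.
Implicit Types (u v w x y : 'cV[R[i]]_d) (A : 'M[R[i]]_d).

Lemma sqnorm_le1_coord v k : sqnorm v <= 1 -> `|v k 0| <= 1.
Proof.
move=> v_le1; rewrite -(@expr_le1 _ 2) //.
have vk_le : `|v k 0| ^+ 2 <= (sqnorm v)%:C.
  by rewrite sqnormE (bigD1 k) //= lerDl sumr_ge0 // => j _; rewrite exprn_ge0.
by apply: le_trans vk_le _; rewrite -(rmorph1 (real_complex R)) lecR.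
Qed.

(* Without an upper bound, the [sup] defining [opnorm] would be a junk value. *)
Lemma sqnorm_mulmx_bounded A :
  exists K, forall v, sqnorm v <= 1 -> sqnorm (A *m v) <= K.
Proof.
exists (complex.Re (\sum_i (\sum_j `|A i j|) ^+ 2)) => v v_le1.
suff : (sqnorm (A *m v))%:C <= \sum_i (\sum_j `|A i j|) ^+ 2.
  by rewrite lecE => /andP[].
rewrite sqnormE; apply: ler_sum => i _.
rewrite ler_pXn2r ?nnegrE ?sumr_ge0 // mxE.
apply: le_trans (ler_norm_sum _ _ _) _; apply: ler_sum => j _.
by rewrite normrM ler_piMr ?sqnorm_le1_coord.
Qed.

Lemma vnorm_le1 v : (vnorm v <= 1) = (sqnorm v <= 1).
Proof. by rewrite vnormE -[in LHS]sqrtr1 ler_sqrt ?ler01. Qed.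

Lemma opnorm_ub A v : vnorm v <= 1 -> vnorm (A *m v) <= opnorm A.
Proof.
move=> v_le1; apply: ub_le_sup; last by exists v.
have [K AK] := sqnorm_mulmx_bounded A.
exists (Num.sqrt K) => _ [w w_le1 <-].
by rewrite vnormE ler_wsqrtr // AK // -vnorm_le1.
Qed.

Lemma opnorm_ge0 A : 0 <= opnorm A.
Proof.
have := @opnorm_ub A 0; rewrite mulmx0 vnormE sqnorm0 sqrtr0.
by apply; rewrite ler01.
Qed.

Lemma vnorm_mulmx_le A v : vnorm (A *m v) <= opnorm A * vnorm v.
Proof.
have [->|v_neq0] := eqVneq v 0.
  by rewrite mulmx0 vnormE sqnorm0 sqrtr0 mulr0.
have v_gt0 : 0 < vnorm v.
  rewrite vnormE sqrtr_gt0 lt_def sqnorm_ge0 andbT.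
  by apply: contra_neq v_neq0; apply: sqnorm_eq0.
have w_le1 : vnorm ((vnorm v)^-1%:C *: v) <= 1.
  by rewrite vnormZ ger0_norm ?invr_ge0 ?(ltW v_gt0) // mulVf ?gt_eqF.
have := opnorm_ub A _ w_le1.
rewrite -scalemxAr vnormZ ger0_norm ?invr_ge0 ?(ltW v_gt0) //.
by rewrite -ler_pdivrMr // mulrC.
Qed.

Lemma Re_sesq_le_opnorm A y : complex.Re (sesq A y y) <= opnorm A * sqnorm y.
Proof.
set z := A *m y; rewrite sesq_mulmx -/z.
have z_le : sqnorm z <= opnorm A ^+ 2 * sqnorm y.
  rewrite -(sqr_sqrtr (sqnorm_ge0 z)) -(sqr_sqrtr (sqnorm_ge0 y)) -exprMn.
  rewrite ler_pXn2r ?nnegrE ?mulr_ge0 ?sqrtr_ge0 ?opnorm_ge0 //.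
  exact: vnorm_mulmx_le.
have := opnorm_ge0 A; rewrite le_eqVlt => /orP[/eqP A0|A_gt0].
  rewrite -A0 expr0n mul0r in z_le.
  have -> : z = 0 by apply: sqnorm_eq0; apply/le_anti; rewrite sqnorm_ge0 z_le.
  rewrite -A0 mul0r /sesq big1 // => i _; rewrite big1 // => j _.
  by rewrite !mxE mulr0.
have := psd_sesq_le 1 (opnorm A) y z psd1; rewrite !sesq1_self /=; nra.
Qed.

Lemma psd_sqnorm_mulmx_le A (l : R) x : psd A -> 0 <= l ->
    (forall y, complex.Re (sesq A y y) <= l * sqnorm y) ->
  sqnorm (A *m x) <= l ^+ 2 * sqnorm x.
Proof.
move=> psdA l_ge0 A_le; set y := A *m x; have [hA _] := psdA.
have Re_xy : complex.Re (sesq A x y) = sqnorm y.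
  by rewrite (sesq_hermitian A y x hA) Re_conjc sesq_mulmx sesq1_self.
have key c : 2 * c * sqnorm y <= c ^+ 2 * (l * sqnorm x) + l * sqnorm y.
  have := psd_sesq_le A c x y psdA; rewrite Re_xy.
  have := A_le x; have := A_le y; nra.
have := l_ge0; rewrite le_eqVlt => /orP[/eqP l0|l_gt0].
  by have := key 1; rewrite -l0 !mul0r expr0n mul0r; have := sqnorm_ge0 y; lra.
by rewrite -(ler_pM2l l_gt0); have := key l; lra.
Qed.

Lemma psd_opnorm_le A (l : R) : psd A -> 0 <= l ->
  (forall y, complex.Re (sesq A y y) <= l * sqnorm y) -> opnorm A <= l.
Proof.
move=> psdA l_ge0 A_le.
have v0_le1 : vnorm (0 : 'cV[R[i]]_d) <= 1 by rewrite vnorm_le1 sqnorm0 ler01.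
apply: ge_sup; first by exists (vnorm (A *m 0)), 0.
move=> _ [v v_le1 <-].
rewrite vnormE -(ger0_norm l_ge0) -sqrtr_sqr ler_wsqrtr //.
apply: le_trans (psd_sqnorm_mulmx_le A l v psdA l_ge0 A_le) _.
by rewrite ler_piMr ?sqr_ge0 // -vnorm_le1.
Qed.

Lemma opnorm_psd_sum_le (I : finType) (D : I -> 'M[R[i]]_d) (t : I -> R)
    (tau B : R) (m : nat) :
    (forall k, psd (D k)) -> 0 <= tau -> (forall k, 0 <= t k <= tau) ->
    \sum_k t k <= tau * m%:R ->
    (forall J : {set I}, (#|J| <= m)%N -> opnorm (\sum_(k in J) D k) <= B) ->
  opnorm (\sum_k (t k)%:C *: D k) <= tau * B.
Proof.
move=> psdD tau_ge0 t_bnd t_sum D_le.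
have B_ge0 : 0 <= B.
  by apply: le_trans (opnorm_ge0 _) (D_le finset.set0 _); rewrite cards0.
have t_ge0 k : 0 <= t k by have /andP[] := t_bnd k.
apply: psd_opnorm_le; [exact: psd_sum_scale | exact: mulr_ge0 | move=> y].
pose a k := complex.Re (sesq (D k) y y).
have [J cardJ ta_le] := weighted_sum_le_top_sum a t tau m
  (fun k => psd_Re_ge0 (D k) y (psdD k)) t_bnd t_sum.
have -> : complex.Re (sesq (\sum_k (t k)%:C *: D k) y y) = \sum_k t k * a k.
  rewrite sesq_sum raddf_sum; apply: eq_bigr => k _.
  by rewrite sesqZ; apply: Re_realM.
apply: le_trans ta_le _; rewrite -mulrA ler_wpM2l //.
have -> : \sum_(k in J) a k = complex.Re (sesq (\sum_(k in J) D k) y y).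
  by rewrite sesq_sum raddf_sum.
apply: le_trans (Re_sesq_le_opnorm _ y) _.
by rewrite ler_wpM2r ?sqnorm_ge0 ?D_le.
Qed.

End OperatorNorm.

Local Open Scope classical_set_scope.

Lemma has_ubound_fin_image (R : realDomainType) (T : finType) (P : set T)
    (f : T -> R) :
  has_ubound [set f x | x in P].
Proof. by exists (\big[Num.max/0]_x f x) => _ [x _ <-]; apply: le_bigmax. Qed.

Theorem lemma6p1 (R : realType) (n d : nat) (t : 'I_n -> R)
    (D : 'I_n -> 'M[R[i]]_d) (T1 Tinf : R) :
  (forall k, 0 <= t k) ->
  (forall k, psd (D k)) ->
  l1norm t <= T1 ->
  0 < Tinf -> linfnorm t <= Tinf ->
  opnorm (\sum_(k < n) (t k)%:C *: D k) <=
    Tinf * sup [set opnorm (\sum_(k in I) D k) |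
                I in [set I : {set 'I_n} | (#|I|%:Z <= Num.ceil (T1 / Tinf))%R]].
Proof.
move=> t_ge0 psdD t_l1 Tinf_gt0 t_linf.
have ceil_ge0 : 0 <= Num.ceil (T1 / Tinf).
  rewrite ceil_ge0 (lt_le_trans (ltrN10 R)) // divr_ge0 ?(ltW Tinf_gt0) //.
  by apply: le_trans _ t_l1; apply: sumr_ge0 => k _.
set m := `|Num.ceil (T1 / Tinf)|%N.
have m_ceil : m%:Z = Num.ceil (T1 / Tinf) by rewrite gez0_abs.
apply: (opnorm_psd_sum_le _ D t Tinf _ m) => // [|||J cardJ].
- exact: ltW.
- move=> k; rewrite t_ge0 /= (le_trans _ t_linf) // -[t k]ger0_norm //.
  exact: (le_bigmax _ (fun i => `|t i|)).
- have -> : \sum_k t k = l1norm t by apply: eq_bigr => k _; rewrite ger0_norm.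
  apply: le_trans t_l1 _.
  by rewrite mulrC -ler_pdivrMr // pmulrn m_ceil ceil_ge.
- apply: ub_le_sup; first exact: has_ubound_fin_image.
  by exists J; rewrite //= -m_ceil lez_nat.
Qed.
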